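(* Let $p_1,p_2,p_3,\dots=2,3,5,7,\dots$ be the list of all primes, $T=\bigoplus_{n\in\mathbb N}\mathbb Z(p_n^n)$, $P=\prod_{n\in\mathbb N}\mathbb Z(p_n^n)$, and $\mathbf z\in P$ the element whose $n$-th coordinate is $1\in\mathbb Z(p_n^n)$ for every $n$. Let $G=\{\mathbf y\in P:\ k\mathbf y\in T+\mathbb Z\mathbf z \text{ for some integer } k\neq 0\}$, the purification of $T+\mathbb Z\mathbf z$ in $P$, so that $G$ is pure in $P$, $T$ is the torsion subgroup of $G$, and $G/T\cong\mathbb Q$. Then $G$ is strongly co-Hopfian and $G/T$ is strongly co-Hopfian, but $T$ is not strongly co-Hopfian; in particular $G$ is strongly co-Hopfian but not uniformly strongly co-Hopfian.
   Context: All groups are abelian. A group $G$ is strongly co-Hopfian if for every endomorphism $f$ of $G$ there is $n\in\mathbb N$ with $f^n(G)=f^{n+1}(G)$; it is uniformly strongly co-Hopfian if there is a fixed $m$ with $\phi^m(G)=\phi^{m+1}(G)$ for all endomorphisms $\phi$. $\mathbb Z(q)$ denotes the cyclic group of order $q$. *)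

From HB Require Import structures.
From mathcomp Require Import all_boot all_order all_algebra.
From mathcomp Require Import boolp.
Set Implicit Arguments. Unset Strict Implicit. Unset Printing Implicit Defensive.
Import Order.TTheory GRing.Theory Num.Theory.
Local Open Scope ring_scope.

(* An abelian group is given as a subgroup S
   (a predicate) of an ambient zmodType V; a quotient group S/K (K a subgroup
   of S) is handled through lifts: an endomorphism of S/K is represented by a
   map f : V -> V sending S into S which is additive modulo K and respects
   congruence modulo K.  (Every endomorphism of S/K arises this way, by choice
   of representatives.)  The subgroup f^n(S/K) of S/K is represented by its
   full preimage in S, i.e. f^n(S) + K. *)

Section CoHopf.
Variable V : zmodType.

Definition endo_mod (S K : V -> Prop) (f : V -> V) : Prop :=
  [/\ (forall x, S x -> S (f x)),
      (forall x y, S x -> S y -> K (f (x + y) - (f x + f y)))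
    & (forall x y, S x -> S y -> K (x - y) -> K (f x - f y))].

Definition image_mod (S K : V -> Prop) (f : V -> V) (n : nat) : V -> Prop :=
  fun y => S y /\ exists2 x, S x & K (y - iter n f x).

Definition strongly_coHopfian_quot (S K : V -> Prop) : Prop :=
  forall f, endo_mod S K f ->
    exists n : nat, forall y, image_mod S K f n y <-> image_mod S K f n.+1 y.

Definition unif_strongly_coHopfian_quot (S K : V -> Prop) : Prop :=
  exists m : nat, forall f, endo_mod S K f ->
    forall y, image_mod S K f m y <-> image_mod S K f m.+1 y.

Definition zero_sub : V -> Prop := fun x => x = 0.

Definition strongly_coHopfian (S : V -> Prop) : Prop :=
  strongly_coHopfian_quot S zero_sub.
Definition unif_strongly_coHopfian (S : V -> Prop) : Prop :=
  unif_strongly_coHopfian_quot S zero_sub.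

End CoHopf.

Lemma next_prime_ex (m : nat) : exists p, ((m < p)%N && prime p).
Proof. by case: (prime_above m) => p h1 h2; exists p; rewrite h1 h2. Qed.

Definition next_prime (m : nat) : nat := ex_minn (next_prime_ex m).

(* nth_prime i = p_(i+1): nth_prime 0 = 2, nth_prime 1 = 3, ... *)
Fixpoint nth_prime (i : nat) : nat :=
  if i is i'.+1 then next_prime (nth_prime i') else 2.

(* modulus of coordinate i (0-based): p_(i+1)^(i+1) *)
Definition modulus (i : nat) : nat := (nth_prime i ^ i.+1)%N.

Local Open Scope nat_scope.
Lemma nth_prime_ge2 i : (2 <= nth_prime i)%N.
Proof.
case: i => [//|i] /=; rewrite /next_prime.
by case: ex_minnP => p /andP[_ /prime_gt1].
Qed.

Lemma modulus_gt1 i : (1 < modulus i)%N.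
Proof.
rewrite /modulus; have h := nth_prime_ge2 i.
by rewrite -(exp1n i.+1) ltn_exp2r.
Qed.

(* since modulus i >= 2, 'Z_(modulus i) is exactly Z/(p^n)Z *)
Local Open Scope ring_scope.
Definition P : Type := forall i : nat, 'Z_(modulus i).

HB.instance Definition _ := Choice.on P.

Definition P_zero : P := fun i => 0.
Definition P_add (x y : P) : P := fun i => x i + y i.
Definition P_opp (x : P) : P := fun i => - x i.

Lemma P_addA : associative P_add.
Proof. by move=> x y z; apply: functional_extensionality_dep => i; rewrite /P_add addrA. Qed.
Lemma P_addC : commutative P_add.
Proof. by move=> x y; apply: functional_extensionality_dep => i; rewrite /P_add addrC. Qed.
Lemma P_add0 : left_id P_zero P_add.
Proof. by move=> x; apply: functional_extensionality_dep => i; rewrite /P_add add0r. Qed.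
Lemma P_addN : left_inverse P_zero P_opp P_add.
Proof. by move=> x; apply: functional_extensionality_dep => i; rewrite /P_add /P_opp addNr. Qed.

HB.instance Definition _ := GRing.isZmodule.Build P P_addA P_addC P_add0 P_addN.

Definition Tsub : P -> Prop :=
  fun x => exists N : nat, forall i, (N <= i)%N -> x i = 0.

Definition zvec : P := fun i => 1.

Definition Gsub : P -> Prop :=
  fun y => exists2 k : int, k != 0 &
           exists2 t, Tsub t & exists m : int, y *~ k = t + zvec *~ m.

From HB Require Import structures.
From mathcomp Require Import all_boot all_order all_algebra.
From mathcomp Require Import boolp.
From mathcomp Require Import zify ring.

(* With the coordinatewise product, P is a commutative ring and G a subring
   closed under coordinatewise inversion.  Since G contains T and its elements
   vanishing at coordinate i are divisible in G by p_i^i, every endomorphism of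
   G is multiplication by some a in G.  Such an a satisfies k a = m off a finite
   set, so it is eventually 0 or eventually a unit; its non-unit coordinates are
   therefore nilpotent of bounded exponent N and the images of a^n stabilise at
   n = N.  Modulo T, G is rational of rank one: an endomorphism of G/T is zero or
   onto, so the images stabilise at n = 1.  Finally, multiplying coordinate n by
   p_n separates the n-th and (n+1)-st images, because p_n^n <> 0 = p_n^(n+1) in
   Z(p_n^(n+1)); doing so in every coordinate is an endomorphism of T, and doing
   so in a single coordinate is an endomorphism of G, which rules out a uniform
   bound. *)

Set Implicit Arguments. Unset Strict Implicit. Unset Printing Implicit Defensive.
Import Order.TTheory GRing.Theory Num.Theory.
Local Open Scope ring_scope.

Section ImageMod.
Variables (V : zmodType) (S K : V -> Prop) (f : V -> V).
Hypothesis fS : forall x, S x -> S (f x).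

Lemma iter_stable n x : S x -> S (iter n f x).
Proof. by elim: n => [|n IH] //= /IH; apply: fS. Qed.

Lemma image_mod_succ n y : image_mod S K f n.+1 y -> image_mod S K f n y.
Proof.
by case=> Sy [x Sx Kx]; split=> //; exists (f x); rewrite -?iterSr //; apply: fS.
Qed.

Lemma image_mod_stable n :
  (forall y, image_mod S K f n y -> image_mod S K f n.+1 y) ->
  forall y, image_mod S K f n y <-> image_mod S K f n.+1 y.
Proof. by move=> h y; split; [apply: h | apply: image_mod_succ]. Qed.

End ImageMod.

Lemma image_mod0P (V : zmodType) (S : V -> Prop) f n y :
  image_mod S (@zero_sub V) f n y <-> S y /\ exists2 x, S x & y = iter n f x.
Proof.
rewrite /image_mod /zero_sub.
split=> -[Sy [x Sx e]]; split=> //; exists x => //; last by rewrite e subrr.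
by apply/eqP; rewrite -subr_eq0; apply/eqP.
Qed.

Lemma endo_mod0P (V : zmodType) (S : V -> Prop) f :
  endo_mod S (@zero_sub V) f <->
  (forall x, S x -> S (f x)) /\ (forall x y, S x -> S y -> f (x + y) = f x + f y).
Proof.
rewrite /endo_mod /zero_sub; split=> [[fS fD _] | [fS fD]].
  by split=> // x y Sx Sy; apply/eqP; rewrite -subr_eq0; apply/eqP; apply: fD.
split=> // x y Sx Sy; first by rewrite fD // subrr.
by move/eqP; rewrite subr_eq0 => /eqP->; rewrite subrr.
Qed.

Lemma next_prime_spec m : (m < next_prime m)%N /\ prime (next_prime m).
Proof. by rewrite /next_prime; case: ex_minnP => p /andP[]. Qed.

Lemma nth_prime_prime i : prime (nth_prime i).
Proof. by case: i => [|i] //=; case: (next_prime_spec (nth_prime i)). Qed.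

Lemma nth_prime_ltS i : (nth_prime i < nth_prime i.+1)%N.
Proof. exact: (next_prime_spec _).1. Qed.

Lemma nth_prime_ge i : (i.+2 <= nth_prime i)%N.
Proof. by elim: i => [|i IH] //; have := nth_prime_ltS i; lia. Qed.

Lemma nth_prime_inj : injective nth_prime.
Proof.
move=> i j eq_ij; have lt := homo_ltn ltn_trans nth_prime_ltS.
by case: (ltngtP i j) => // /lt; rewrite eq_ij ltnn.
Qed.

Lemma coprime_modulus i j : i != j -> coprime (modulus i) (modulus j).
Proof.
move=> ne_ij; rewrite coprime_pexpl // coprime_pexpr //.
by rewrite prime_coprime ?dvdn_prime2 ?nth_prime_prime // (inj_eq nth_prime_inj).
Qed.

Lemma Zp_nat_eq0 n m : (1 < n)%N -> ((m%:R : 'Z_n) == 0) = (n %| m)%N.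
Proof. by move=> n_gt1; rewrite -(inj_eq val_inj) /= val_Zp_nat. Qed.

Lemma Zp_int_unit n (c : int) :
  (1 < n)%N -> coprime n `|c| -> (c%:~R : 'Z_n) \is a GRing.unit.
Proof.
by move=> n_gt1; case: c => m /= h; rewrite ?NegzE ?mulrNz ?unitrN unitZpE.
Qed.

Lemma Zp_nonunit_nilpotent p k (a : 'Z_(p ^ k)) : prime p -> (0 < k)%N ->
  a \isn't a GRing.unit -> a ^+ k = 0.
Proof.
move=> p_pr k_gt0; have pk_gt1 : (1 < p ^ k)%N.
  by rewrite -(exp1n k) ltn_exp2r ?prime_gt1.
rewrite -(natr_Zp a) unitZpE // coprime_pexpl // prime_coprime // negbK => p_dvd.
by apply/eqP; rewrite -natrX Zp_nat_eq0 // dvdn_exp2r.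
Qed.

Local Notation R i := 'Z_(modulus i).

Lemma modulus_int_unit i (c : int) :
  c != 0 -> (`|c| < i)%N -> (c%:~R : R i) \is a GRing.unit.
Proof.
move=> c_neq0 c_lt; apply: Zp_int_unit; first exact: modulus_gt1.
rewrite coprime_pexpl // prime_coprime ?nth_prime_prime //.
apply/negP => /dvdn_leq; have := nth_prime_ge i; rewrite absz_gt0 c_neq0; lia.
Qed.

Lemma Pext (x y : P) : (forall i, x i = y i) -> x = y.
Proof. exact: functional_extensionality_dep. Qed.

Definition P_mul (x y : P) : P := fun i => x i * y i.

Lemma P_mulA : associative P_mul.
Proof. by move=> x y z; apply: Pext => i; apply: mulrA. Qed.
Lemma P_mulC : commutative P_mul.
Proof. by move=> x y; apply: Pext => i; apply: mulrC. Qed.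
Lemma P_mul1 : left_id zvec P_mul.
Proof. by move=> x; apply: Pext => i; apply: mul1r. Qed.
Lemma P_mulDl : left_distributive P_mul +%R.
Proof. by move=> x y z; apply: Pext => i; apply: mulrDl. Qed.
Lemma P_one_neq0 : zvec != 0.
Proof. by apply/eqP => /(congr1 (fun x : P => x 0%N))/eqP; rewrite oner_eq0. Qed.

HB.instance Definition _ :=
  GRing.Zmodule_isComNzRing.Build P P_mulA P_mulC P_mul1 P_mulDl P_one_neq0.

Lemma P_addE (x y : P) i : (x + y) i = x i + y i. Proof. by []. Qed.
Lemma P_oppE (x : P) i : (- x) i = - x i. Proof. by []. Qed.
Lemma P_subE (x y : P) i : (x - y) i = x i - y i. Proof. by []. Qed.
Lemma P_mulE (x y : P) i : (x * y) i = x i * y i. Proof. by []. Qed.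
Lemma P_1E i : (1 : P) i = 1. Proof. by []. Qed.

Lemma P_mulrnE (x : P) n i : (x *+ n) i = x i *+ n.
Proof. by elim: n => [|n IH]; rewrite ?mulr0n // !mulrS P_addE IH. Qed.

Lemma P_mulrzE (x : P) c i : (x *~ c) i = x i *~ c.
Proof.
case: c => n; first exact: P_mulrnE.
by rewrite NegzE !mulrNz P_oppE; congr (- _); apply: (P_mulrnE x n.+1).
Qed.

Lemma P_exprE (x : P) n i : (x ^+ n) i = x i ^+ n.
Proof. by elim: n => [|n IH]; rewrite ?expr0 // !exprS P_mulE IH. Qed.

Lemma P_intrE (c : int) i : (c%:~R : P) i = c%:~R.
Proof. exact: P_mulrzE. Qed.

Definition delta (i : nat) : P := fun j => (i == j)%:R.

Lemma delta_id i : delta i i = 1.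
Proof. by rewrite /delta eqxx. Qed.

Lemma Tsub0 : Tsub 0.
Proof. by exists 0%N. Qed.

Lemma TsubD x y : Tsub x -> Tsub y -> Tsub (x + y).
Proof.
move=> [N1 x0] [N2 y0]; exists (maxn N1 N2) => i le_i.
by rewrite P_addE x0 ?y0 ?addr0 //; lia.
Qed.

Lemma TsubMr x y : Tsub x -> Tsub (x * y).
Proof. by move=> [N x0]; exists N => i le_i; rewrite P_mulE x0 ?mul0r. Qed.

Lemma TsubMl x y : Tsub y -> Tsub (x * y).
Proof. by rewrite mulrC; apply: TsubMr. Qed.

Lemma TsubMz x c : Tsub x -> Tsub (x *~ c).
Proof. by rewrite -mulrzr; apply: TsubMr. Qed.

Lemma TsubN x : Tsub x -> Tsub (- x).
Proof. by rewrite -mulrN1z; apply: TsubMz. Qed.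

Lemma TsubB x y : Tsub x -> Tsub y -> Tsub (x - y).
Proof. by move=> Tx Ty; apply/TsubD/TsubN. Qed.

Lemma Tsub_delta i : Tsub (delta i).
Proof.
by exists i.+1 => j lt_ij; rewrite /delta; case: eqP => // eq_ij; exfalso; lia.
Qed.

Lemma Tsub_mulzK x c : c != 0 -> Tsub (x *~ c) -> Tsub x.
Proof.
move=> c_neq0 [N xc0]; exists (maxn N `|c|.+1) => i le_i.
have c_unit : (c%:~R : R i) \is a GRing.unit by apply: modulus_int_unit => //; lia.
apply: (mulIr c_unit); rewrite mul0r mulrzr -P_mulrzE xc0 //; lia.
Qed.

Lemma GsubP y : Gsub y <->
  exists2 k : int, k != 0 & exists2 t, Tsub t & exists m : int, y *~ k = t + m%:~R.
Proof. by []. Qed.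

Lemma GsubT x : Tsub x -> Gsub x.
Proof.
by move=> Tx; apply/GsubP; exists 1 => //; exists x => //; exists 0; rewrite addr0.
Qed.

Lemma Gsub_int (m : int) : Gsub m%:~R.
Proof.
by apply/GsubP; exists 1 => //; exists 0; [apply: Tsub0 | exists m; rewrite add0r].
Qed.

Lemma GsubD x y : Gsub x -> Gsub y -> Gsub (x + y).
Proof.
move=> /GsubP[k1 k1_neq0 [t1 Tt1 [m1 e1]]] /GsubP[k2 k2_neq0 [t2 Tt2 [m2 e2]]].
apply/GsubP; exists (k1 * k2); first by rewrite mulf_neq0.
exists (t1 *~ k2 + t2 *~ k1); first by apply: TsubD; apply: TsubMz.
exists (m1 * k2 + m2 * k1).
rewrite mulrzDl mulrzA [k1 * k2]mulrC mulrzA e1 e2; ring.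
Qed.

Lemma GsubM x y : Gsub x -> Gsub y -> Gsub (x * y).
Proof.
move=> /GsubP[k1 k1_neq0 [t1 Tt1 [m1 e1]]] /GsubP[k2 k2_neq0 [t2 Tt2 [m2 e2]]].
apply/GsubP; exists (k1 * k2); first by rewrite mulf_neq0.
exists (t1 * t2 + t1 *~ m2 + t2 *~ m1).
  by apply: TsubD; [apply: TsubD; [apply: TsubMr | apply: TsubMz] | apply: TsubMz].
exists (m1 * m2).
rewrite mulrzA -mulrzAl -mulrzAr e1 e2; ring.
Qed.

Lemma GsubMz x c : Gsub x -> Gsub (x *~ c).
Proof. by rewrite -mulrzr => Gx; apply: GsubM => //; apply: Gsub_int. Qed.

Lemma GsubN x : Gsub x -> Gsub (- x).
Proof. by rewrite -mulrN1z; apply: GsubMz. Qed.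

Lemma GsubB x y : Gsub x -> Gsub y -> Gsub (x - y).
Proof. by move=> Gx Gy; apply/GsubD/GsubN. Qed.

Lemma Gsub0 : Gsub 0.
Proof. exact: GsubT Tsub0. Qed.

Lemma Gsub1 : Gsub 1.
Proof. exact: (Gsub_int 1). Qed.

Lemma Gsub_mulzK y c : c != 0 -> Gsub (y *~ c) -> Gsub y.
Proof.
move=> c_neq0 /GsubP[k k_neq0 [t Tt [m e]]].
apply/GsubP; exists (c * k); first by rewrite mulf_neq0.
by exists t => //; exists m; rewrite mulrzA.
Qed.

Lemma Gsub_tail a : Gsub a -> exists k m N, k != 0 /\ forall j, (N <= j)%N ->
  [/\ a j *~ k = m%:~R, m = 0 -> a j = 0 & m != 0 -> a j \is a GRing.unit].
Proof.
move=> /GsubP[k k_neq0 [t [Nt t0] [m e]]].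
exists k, m, (maxn Nt (maxn `|k| `|m|).+1); split=> // j le_j.
have k_unit : (k%:~R : R j) \is a GRing.unit by apply: modulus_int_unit => //; lia.
have akm : a j *~ k = m%:~R by rewrite -P_mulrzE e P_addE t0 ?add0r ?P_intrE //; lia.
split=> // [m0 | m_neq0].
  by apply: (mulIr k_unit); rewrite mul0r mulrzr akm m0.
have m_unit : (m%:~R : R j) \is a GRing.unit by apply: modulus_int_unit => //; lia.
by move: m_unit; rewrite -akm -mulrzr unitrM => /andP[].
Qed.

(* At a non-unit coordinate, [(a j)^-1] is [a j] itself. *)
Definition Pinv (a : P) : P := fun j => (a j)^-1.

Lemma GsubV a : Gsub a -> Gsub (Pinv a).
Proof.
move=> /Gsub_tail[k [m [N [k_neq0 tail]]]].
have [m0 | m_neq0] := eqVneq m 0.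
  by apply: GsubT; exists N => j /tail[_ a0 _]; rewrite /Pinv a0 ?invr0.
apply: (Gsub_mulzK m_neq0); apply/GsubP; exists 1 => //.
exists (Pinv a *~ m - k%:~R); last by exists k; rewrite mulr1z subrK.
exists N => j /tail[akm _ a_unit].
by rewrite P_subE P_mulrzE P_intrE /Pinv -mulrzr -akm mulrzAr mulVr ?subrr ?a_unit.
Qed.

Lemma Gsub_nonunit_nilpotent a : Gsub a ->
  exists N, forall j, a j \isn't a GRing.unit -> a j ^+ N = 0.
Proof.
move=> /Gsub_tail[k [m [N [_ tail]]]]; exists N.+1 => j a_nonunit.
have [/tail[_ a0 a_unit] | lt_j] := leqP N j.
  have [m0 | m_neq0] := eqVneq m 0; first by rewrite a0 // expr0n.
  by rewrite a_unit in a_nonunit.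
have aj_nil :=
  @Zp_nonunit_nilpotent (nth_prime j) j.+1 (a j) (nth_prime_prime j) isT a_nonunit.
by rewrite -(subnKC (ltnW lt_j : (j.+1 <= N.+1)%N)) exprD aj_nil mul0r.
Qed.

Lemma Gsub_dvd_modulus y i :
  Gsub y -> y i = 0 -> exists2 w, Gsub w & y = w *+ modulus i.
Proof.
move=> Gy y0; pose M := modulus i.
pose w : P := fun j => if j == i then 0 else y j / M%:R.
have ew : w *+ M = y.
  apply: Pext => j; rewrite P_mulrnE /w; case: eqP => [-> | /eqP ne_ji].
    by rewrite mul0rn y0.
  have M_unit : (M%:R : R j) \is a GRing.unit.
    by rewrite unitZpE ?modulus_gt1 // coprime_modulus.
  by rewrite -(mulr_natr (_ / _)) divrK.
exists w => //; have M_neq0 : M%:Z != 0 by have := modulus_gt1 i; rewrite /M; lia.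
by apply: (Gsub_mulzK M_neq0); rewrite -pmulrn ew.
Qed.

Section EndoG.
Variable f : P -> P.
Hypothesis fG : forall x, Gsub x -> Gsub (f x).
Hypothesis fD : forall x y, Gsub x -> Gsub y -> f (x + y) = f x + f y.

Lemma endoG0 : f 0 = 0.
Proof. by apply: (addrI (f 0)); rewrite -fD ?addr0 //; apply: Gsub0. Qed.

Lemma endoGMn x n : Gsub x -> f (x *+ n) = f x *+ n.
Proof.
move=> Gx; elim: n => [|n IH]; first by rewrite !mulr0n endoG0.
by rewrite !mulrS fD ?IH //; apply: (GsubMz n).
Qed.

Lemma endoG_coord y i : Gsub y -> f y i = f (delta i) i * y i.
Proof.
move=> Gy; pose n := nat_of_ord (y i).
have Gdn : Gsub (delta i *+ n) := GsubT (TsubMz n (Tsub_delta i)).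
have ydn0 : (y - delta i *+ n) i = 0.
  by rewrite P_subE P_mulrnE delta_id natr_Zp subrr.
have [w Gw ew] := Gsub_dvd_modulus (GsubB Gy Gdn) ydn0.
have Gd := GsubT (Tsub_delta i).
rewrite -[y in f y](subrK (delta i *+ n)) ew.
rewrite fD ?endoGMn //; last exact: (GsubMz (modulus i)).
rewrite P_addE !P_mulrnE -(mulr_natr (f w i)) -(mulr_natr (f (delta i) i)).
by rewrite pchar_Zp ?modulus_gt1 // mulr0 add0r natr_Zp.
Qed.

Lemma endoGE y : Gsub y -> f y = f 1 * y.
Proof.
move=> Gy; apply: Pext => i.
by rewrite P_mulE (endoG_coord i Gy) (endoG_coord i Gsub1) P_1E mulr1.
Qed.

Lemma iter_endoG n y : Gsub y -> iter n f y = f 1 ^+ n * y.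
Proof.
move=> Gy; elim: n => [|n IH]; first by rewrite mul1r.
rewrite iterS endoGE; last exact: (iter_stable fG).
by rewrite IH mulrA -exprS.
Qed.

End EndoG.

Lemma Gsub_strongly_coHopfian : strongly_coHopfian Gsub.
Proof.
move=> f /endo_mod0P[fG fD]; set a := f 1; have Ga : Gsub a := fG _ Gsub1.
have [N a_nil] := Gsub_nonunit_nilpotent Ga.
exists N; apply: image_mod_stable => // y /image_mod0P[Gy [x Gx ->]].
(* a^N x = a^(N+1) (Pinv a x): unit coordinates cancel, the others vanish. *)
have Gx' : Gsub (Pinv a * x) := GsubM (GsubV Ga) Gx.
apply/image_mod0P; split; first exact: iter_stable.
exists (Pinv a * x) => //; rewrite !iter_endoG //; apply: Pext => j.
rewrite !P_mulE !P_exprE /Pinv exprSr -mulrA.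
have [a_unit | /a_nil aN0] := boolP (a j \is a GRing.unit); first by rewrite mulVKr.
by rewrite aN0 !mul0r.
Qed.

Lemma endo_mod_mul (S : P -> Prop) (c : P) :
  (forall x, S x -> S (c * x)) -> endo_mod S (@zero_sub P) ( *%R c).
Proof. by move=> cS; apply/endo_mod0P; split=> // x y _ _; apply: mulrDr. Qed.

Definition pvec : P := fun j => (nth_prime j)%:R.

Lemma pvec_pow_neq n (c x : P) : c n = pvec n -> c ^+ n * delta n != c ^+ n.+1 * x.
Proof.
move=> cn; apply/eqP => /(congr1 (fun v : P => v n)).
rewrite !P_mulE !P_exprE cn delta_id mulr1 /pvec -!natrX.
rewrite (pchar_Zp (modulus_gt1 n)) mul0r => /eqP.
rewrite Zp_nat_eq0 ?modulus_gt1 // dvdn_Pexp2l ?ltnn //.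
by have := nth_prime_ge n; lia.
Qed.

Lemma mul_image_strict (S : P -> Prop) (c : P) n :
  c n = pvec n -> S (delta n) -> (forall x, S x -> S (c * x)) ->
  ~ (forall y, image_mod S (@zero_sub P) ( *%R c) n y <->
               image_mod S (@zero_sub P) ( *%R c) n.+1 y).
Proof.
move=> cn Sd cS stable.
have Sy : S (c ^+ n * delta n) by rewrite -iter_mulr; apply: iter_stable.
have /stable/image_mod0P[_ [x _]] :
    image_mod S (@zero_sub P) ( *%R c) n (c ^+ n * delta n).
  by apply/image_mod0P; split=> //; exists (delta n); rewrite ?iter_mulr.
by rewrite iter_mulr; apply/eqP/pvec_pow_neq.
Qed.

Lemma Tsub_not_strongly_coHopfian : ~ strongly_coHopfian Tsub.
Proof.
have pvecT x : Tsub x -> Tsub (pvec * x) by apply: TsubMl.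
move=> /(_ _ (endo_mod_mul pvecT))[n].
exact: mul_image_strict (Tsub_delta n) pvecT.
Qed.

Definition pvec_at m : P := 1 + delta m * (pvec - 1).

Lemma Gsub_not_unif_strongly_coHopfian : ~ unif_strongly_coHopfian Gsub.
Proof.
have pvec_atG m x : Gsub x -> Gsub (pvec_at m * x).
  move=> Gx; rewrite mulrDl mul1r -mulrA; apply: GsubD => //.
  by apply/GsubT/TsubMr/Tsub_delta.
move=> [m stable]; apply: (mul_image_strict _ (GsubT (Tsub_delta m)) (pvec_atG m)).
  by rewrite /pvec_at P_addE P_mulE delta_id mul1r P_subE P_1E addrC subrK.
exact: stable (endo_mod_mul (pvec_atG m)).
Qed.

Definition congT (x y : P) : Prop := Tsub (x - y).

Lemma congT_refl x : congT x x.
Proof. by rewrite /congT subrr; apply: Tsub0. Qed.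

Lemma congT_sym x y : congT x y -> congT y x.
Proof. by rewrite /congT => Txy; rewrite -opprB; apply: TsubN. Qed.

Lemma congT_trans x y z : congT x y -> congT y z -> congT x z.
Proof. by rewrite /congT => Txy Tyz; rewrite -[x](subrK y) -addrA; apply: TsubD. Qed.

Lemma congTD x y x' y' : congT x x' -> congT y y' -> congT (x + y) (x' + y').
Proof. by rewrite /congT opprD addrACA; apply: TsubD. Qed.

Lemma congTN x y : congT x y -> congT (- x) (- y).
Proof. by rewrite /congT -opprD; apply: TsubN. Qed.

Lemma congTMz x y c : congT x y -> congT (x *~ c) (y *~ c).
Proof. by rewrite /congT -mulrzBl; apply: TsubMz. Qed.

Lemma congT0 x : congT x 0 <-> Tsub x.
Proof. by rewrite /congT subr0. Qed.

Lemma Gsub_congT x :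
  Gsub x -> exists2 k : int, k != 0 & exists m : int, congT (x *~ k) m%:~R.
Proof.
by move=> /GsubP[k k_neq0 [t Tt [m e]]]; exists k => //; exists m; rewrite /congT e addrK.
Qed.

Lemma Gsub_inv_int c : c != 0 -> exists2 u, Gsub u & congT (u *~ c) 1.
Proof.
move=> c_neq0; exists (Pinv c%:~R); first exact/GsubV/Gsub_int.
exists `|c|.+1 => j lt_cj; have c_unit := modulus_int_unit c_neq0 lt_cj.
by rewrite P_subE P_mulrzE P_1E /Pinv P_intrE -mulrzr mulVr ?subrr.
Qed.

Section EndoModT.
Variable f : P -> P.
Hypothesis fG : forall x, Gsub x -> Gsub (f x).
Hypothesis fD : forall x y, Gsub x -> Gsub y -> congT (f (x + y)) (f x + f y).
Hypothesis fC : forall x y, Gsub x -> Gsub y -> congT x y -> congT (f x) (f y).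

Lemma endoT0 : Tsub (f 0).
Proof.
have := fD Gsub0 Gsub0; rewrite /congT addr0 opprD addrA subrr add0r.
by move/TsubN; rewrite opprK.
Qed.

Lemma endoTMn x n : Gsub x -> congT (f (x *+ n)) (f x *+ n).
Proof.
move=> Gx; elim: n => [|n IH]; first by rewrite !mulr0n; apply/congT0/endoT0.
rewrite !mulrS; apply: congT_trans (fD Gx (GsubMz n Gx)) _.
exact: congTD (congT_refl _) IH.
Qed.

Lemma endoTN x : Gsub x -> congT (f (- x)) (- f x).
Proof.
move=> Gx; have := TsubB endoT0 (fD Gx (GsubN Gx)).
by rewrite subrr opprB addrC subrK /congT opprK addrC.
Qed.

Lemma endoTMz x c : Gsub x -> congT (f (x *~ c)) (f x *~ c).
Proof.
move=> Gx; case: c => n; first exact: endoTMn.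
rewrite NegzE !mulrNz; apply: congT_trans (endoTN (GsubMz n.+1 Gx)) _.
exact/congTN/endoTMn.
Qed.

Lemma endoT_rat x k m : Gsub x -> congT (x *~ k) m%:~R -> congT (f x *~ k) (f 1 *~ m).
Proof.
move=> Gx xkm; apply: congT_trans (congT_sym (endoTMz k Gx)) _.
apply: congT_trans (fC (GsubMz k Gx) (Gsub_int m) xkm) _.
exact: (endoTMz m Gsub1).
Qed.

Lemma endoT_torsion : Tsub (f 1) -> forall x, Gsub x -> Tsub (f x).
Proof.
move=> f1T x Gx; have [k k_neq0 [m xkm]] := Gsub_congT Gx.
apply: (Tsub_mulzK k_neq0); apply/congT0.
exact: congT_trans (endoT_rat Gx xkm) (proj2 (congT0 _) (TsubMz m f1T)).
Qed.

Lemma endoT_onto :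
  ~ Tsub (f 1) -> forall w, Gsub w -> exists2 x, Gsub x & congT (f x) w.
Proof.
move=> f1NT w Gw; have [a a_neq0 [m0 f1am0]] := Gsub_congT (fG Gsub1).
have m0_neq0 : m0 != 0.
  apply: contra_notN f1NT => /eqP m00; apply: (Tsub_mulzK a_neq0); apply/congT0.
  by move: f1am0; rewrite m00 mulr0z.
have [k k_neq0 [m wkm]] := Gsub_congT Gw.
have c_neq0 : k * m0 != 0 by rewrite mulf_neq0.
have [u Gu uc1] := Gsub_inv_int c_neq0.
(* Modulo T, f is multiplication by m0/a and w = m/k; u is 1/(k m0). *)
have e1 : congT (u *~ (a * m) *~ (k * m0)) (a * m)%:~R.
  by rewrite mulrzAC; apply: congTMz uc1.
have e2 : congT (f 1 *~ (a * m)) (m0 * m)%:~R.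
  by rewrite mulrzA [X in congT _ X]mulrzA; apply: congTMz f1am0.
have e3 : congT (w *~ (k * m0)) (m0 * m)%:~R.
  by rewrite mulrzA [m0 * m]mulrC [X in congT _ X]mulrzA; apply: congTMz wkm.
exists (u *~ (a * m)); first exact: GsubMz.
apply: (Tsub_mulzK c_neq0); rewrite mulrzBl.
exact: congT_trans (congT_trans (endoT_rat (GsubMz _ Gu) e1) e2) (congT_sym e3).
Qed.

End EndoModT.

Lemma GsubT_strongly_coHopfian : strongly_coHopfian_quot Gsub Tsub.
Proof.
move=> f [fG fD fC]; exists 1%N; apply: image_mod_stable => // y [Gy [x Gx yfx]].
split=> //; have [f1T | f1NT] := pselect (Tsub (f 1)).
  exists 0; first exact: Gsub0.
  have fxT := endoT_torsion fD fC f1T Gx.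
  have ff0T := endoT_torsion fD fC f1T (fG _ Gsub0).
  by have := TsubB (TsubD yfx fxT) ff0T; rewrite subrK.
have [x' Gx' fx'x] := endoT_onto fG fD fC f1NT Gx.
by exists x' => //; apply: congT_trans yfx (congT_sym (fC _ _ (fG _ Gx') Gx fx'x)).
Qed.

Theorem mainTheorem15 :
  [/\ strongly_coHopfian Gsub,
      strongly_coHopfian_quot Gsub Tsub,
      ~ strongly_coHopfian Tsub
    & ~ unif_strongly_coHopfian Gsub].
Proof.
split.
- exact: Gsub_strongly_coHopfian.
- exact: GsubT_strongly_coHopfian.
- exact: Tsub_not_strongly_coHopfian.
- exact: Gsub_not_unif_strongly_coHopfian.
Qed.
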